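(* For $\gamma\ge0$ let $P_1(\gamma),P_2(\gamma),\dots$ be i.i.d. Poisson random variables with parameter $\gamma$. Let $x\in\mathbb{R}$, $\delta>0$, $\lambda\ge0$, $\epsilon>0$, and set $\lambda^-_\epsilon=\max\{0,\lambda-\epsilon\}$, $\lambda^+_\epsilon=\lambda+\epsilon$. Then for every $n\in\mathbb{N}$, $$\inf_{\gamma\in(\lambda-\epsilon,\lambda+\epsilon)\cap[0,\infty)}\mathbb{P}\Big(\tfrac1n\textstyle\sum_{i=1}^nP_i(\gamma)\in(x-\delta,x+\delta)\Big)=\inf_{\gamma\in C}\mathbb{P}\Big(\tfrac1n\textstyle\sum_{i=1}^nP_i(\gamma)\in(x-\delta,x+\delta)\Big),$$ where $C=\big((\lambda-\epsilon,\lambda+\epsilon)\cap[x-\delta,x+\delta]\cap[0,\infty)\big)\cup\{\lambda^-_\epsilon,\lambda^+_\epsilon\}$. *)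

From Stdlib Require Import Reals Lra Arith Factorial.
From Coquelicot Require Import Coquelicot.
Open Scope R_scope.

(* Poisson(gamma) probability mass function on nat. (0^0 = 1 in Stdlib.) *)
Definition poisson_pmf (gamma : R) (k : nat) : R :=
  exp (- gamma) * gamma ^ k / INR (Factorial.fact k).

(* Law of S_n = P_1 + ... + P_n for i.i.d. P_i ~ Poisson(gamma):
   the n-fold convolution of the Poisson pmf (law of a sum of independent
   variables = convolution of their laws).  S_0 = 0. *)
Fixpoint sum_pmf (n : nat) (gamma : R) (m : nat) : R :=
  match n with
  | O => if Nat.eqb m 0 then 1 else 0
  | S n' => sum_f_R0 (fun j => sum_pmf n' gamma (m - j)%nat * poisson_pmf gamma j) m
  end.

Definition prob_mean_in (n : nat) (gamma x delta : R) : R :=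
  Series (fun m =>
    if Rlt_dec (x - delta) (INR m / INR n) then
      if Rlt_dec (INR m / INR n) (x + delta) then sum_pmf n gamma m else 0
    else 0).

Definition inf_prob (A : R -> Prop) (n : nat) (x delta : R) : Rbar :=
  Glb_Rbar (fun y => exists gamma, A gamma /\ y = prob_mean_in n gamma x delta).

(* The mean of n i.i.d. Poisson(g) variables is S_n / n with S_n ~ Poisson(n g), so the
   probability that it falls in (x - delta, x + delta) is a finite sum of Poisson weights
   e^(-c) c^m / m! over the integers m with m / n in the window, taken at c = n g.  The
   weight of m increases in c up to c = m and decreases afterwards; hence the probability,
   a continuous function of g, is nondecreasing for g < x - delta and nonincreasing for
   g > x + delta.  The infimum over the parameter interval is therefore attained, up to
   passing to its closure, either inside [x - delta, x + delta] or at an end point. *)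

From Stdlib Require Import Reals Lra Lia Factorial.
From Coquelicot Require Import Coquelicot.
Open Scope R_scope.

Lemma sum_pmf_poisson (n : nat) (g : R) (m : nat) :
  sum_pmf n g m = poisson_pmf (INR n * g) m.
Proof.
revert m; induction n as [|n IH]; intro m.
- unfold poisson_pmf; simpl. destruct m as [|m]; simpl.
  + rewrite Rmult_0_l, Ropp_0, exp_0. field.
  + lra.
- simpl sum_pmf. unfold poisson_pmf at 2.
  replace (INR (S n) * g) with (g + INR n * g) by (rewrite S_INR; ring).
  rewrite binomial.
  unfold Rdiv. rewrite Rmult_comm, <- Rmult_assoc, (Rmult_comm _ (exp _)).
  rewrite scal_sum. apply sum_eq. intros i _.
  rewrite IH. unfold poisson_pmf, Binomial.C.
  replace (- (g + INR n * g)) with (- (INR n * g) + - g) by ring.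
  rewrite exp_plus.
  pose proof (INR_fact_neq_0 i). pose proof (INR_fact_neq_0 (m - i)).
  pose proof (INR_fact_neq_0 m).
  field. auto.
Qed.

Lemma le_of_derive_nonneg (f df : R -> R) (a b : R) :
  (forall c, derivable_pt_lim f c (df c)) -> (forall c, a < c < b -> 0 <= df c) ->
  a <= b -> f a <= f b.
Proof.
intros Hder Hpos Hab.
destruct (Rle_lt_or_eq_dec a b Hab) as [Hlt|<-]; [|lra].
destruct (MVT_cor2 f df a b Hlt (fun c _ => Hder c)) as [c [Hc Hc_in]].
assert (0 <= df c * (b - a)) by (apply Rmult_le_pos; [apply Hpos|]; lra).
lra.
Qed.

Lemma poisson_pmf_derive (m : nat) (c : R) :
  derivable_pt_lim (fun c => poisson_pmf c m) c
    (exp (- c) * (INR m * c ^ pred m - c ^ m) / INR (fact m)).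
Proof.
apply is_derive_Reals. unfold poisson_pmf.
auto_derive; [auto|]. field. apply INR_fact_neq_0.
Qed.

(* For m >= 1 the derivative of [poisson_pmf c m] has the sign of [(m - c) c^(m-1)]. *)
Lemma poisson_pmf_le_param (m : nat) (c1 c2 : R) :
  0 <= c1 <= c2 -> c2 <= INR m -> poisson_pmf c1 m <= poisson_pmf c2 m.
Proof.
intros Hc Hm. apply (le_of_derive_nonneg _ _ c1 c2 (poisson_pmf_derive m)); [|lra].
intros c Hc_in.
destruct m as [|k]; [simpl in Hm; lra|].
assert (Hpow : 0 <= c ^ k) by (apply pow_le; lra).
replace (INR (S k) * c ^ pred (S k) - c ^ S k) with ((INR (S k) - c) * c ^ k)
  by (simpl; ring).
unfold Rdiv. apply Rmult_le_pos; [|left; apply Rinv_0_lt_compat, INR_fact_lt_0].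
apply Rmult_le_pos; [left; apply exp_pos|]. apply Rmult_le_pos; lra.
Qed.

Lemma poisson_pmf_ge_param (m : nat) (c1 c2 : R) :
  INR m <= c1 <= c2 -> poisson_pmf c2 m <= poisson_pmf c1 m.
Proof.
intros Hc. pose proof (pos_INR m).
apply Ropp_le_cancel.
apply (le_of_derive_nonneg (fun c => - poisson_pmf c m)
  (fun c => - (exp (- c) * (INR m * c ^ pred m - c ^ m) / INR (fact m))) c1 c2);
  [intro c; apply derivable_pt_lim_opp, poisson_pmf_derive| |lra].
intros c Hc_in. apply Ropp_0_ge_le_contravar, Rle_ge.
assert (Hslope : INR m * c ^ pred m - c ^ m <= 0).
{ destruct m as [|k]; [simpl; lra|].
  assert (0 <= c ^ k) by (apply pow_le; lra).
  replace (INR (S k) * c ^ pred (S k) - c ^ S k) with ((INR (S k) - c) * c ^ k)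
    by (simpl; ring).
  apply Rmult_le_0_r; lra. }
unfold Rdiv. rewrite Rmult_assoc.
apply Rmult_le_0_l; [left; apply exp_pos|].
apply Rmult_le_0_r; [lra|left; apply Rinv_0_lt_compat, INR_fact_lt_0].
Qed.

Lemma Series_finite (a : nat -> R) (N : nat) :
  (forall k, (N < k)%nat -> a k = 0) -> Series a = sum_f_R0 a N.
Proof.
intro Ha. apply is_series_unique.
apply filterlim_ext_loc with (fun _ => sum_f_R0 a N); [|apply filterlim_const].
exists N. intros k Hk. rewrite sum_n_Reals. symmetry.
induction Hk as [|k Hk IHk]; [reflexivity|].
simpl. rewrite IHk, Ha; [ring|lia].
Qed.

Section MeanInWindow.
Variables (n : nat) (x delta : R).
Hypothesis n_pos : (1 <= n)%nat.

Definition window_pmf (g : R) (m : nat) : R :=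
  if Rlt_dec (x - delta) (INR m / INR n) then
    if Rlt_dec (INR m / INR n) (x + delta) then sum_pmf n g m else 0
  else 0.

Lemma INR_n_pos : 0 < INR n.
Proof. apply lt_0_INR; lia. Qed.

Lemma prob_mean_in_finite_sum :
  exists N, forall g, prob_mean_in n g x delta = sum_f_R0 (window_pmf g) N.
Proof.
pose proof INR_n_pos as Hn.
destruct (INR_unbounded (INR n * (x + delta))) as [N HN].
exists N. intro g. apply Series_finite. intros k Hk.
unfold window_pmf. destruct (Rlt_dec _ _); [|reflexivity].
destruct (Rlt_dec _ _) as [Hup|]; [|reflexivity].
apply lt_INR in Hk.
assert (INR k < INR n * (x + delta)); [|lra].
replace (INR k) with (INR n * (INR k / INR n)) by (field; lra).
apply Rmult_lt_compat_l; assumption.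
Qed.

Lemma continuity_pt_prob_mean_in (g0 : R) :
  continuity_pt (fun g => prob_mean_in n g x delta) g0.
Proof.
destruct prob_mean_in_finite_sum as [N HN].
apply (continuity_pt_ext (fun g => sum_f_R0 (fun m => window_pmf g m) N));
  [intro g; symmetry; apply HN|].
apply continuity_pt_finite_SF. intros m _.
unfold window_pmf. destruct (Rlt_dec _ _); [destruct (Rlt_dec _ _)|];
  [|apply continuity_pt_const; intros ? ?; reflexivity ..].
apply (continuity_pt_ext (fun g => poisson_pmf (INR n * g) m));
  [intro g; symmetry; apply sum_pmf_poisson|].
apply continuity_pt_filterlim, (ex_derive_continuous (fun g => poisson_pmf (INR n * g) m)).
unfold poisson_pmf. auto_derive. auto.
Qed.

Lemma prob_mean_in_le_param (g1 g2 : R) :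
  0 <= g1 <= g2 -> g2 < x - delta ->
  prob_mean_in n g1 x delta <= prob_mean_in n g2 x delta.
Proof.
intros Hg Hlow. pose proof INR_n_pos as Hn.
destruct prob_mean_in_finite_sum as [N HN]. rewrite !HN.
apply sum_Rle. intros m _. unfold window_pmf.
destruct (Rlt_dec _ _) as [Hm|]; [destruct (Rlt_dec _ _)|]; try lra.
rewrite !sum_pmf_poisson. apply poisson_pmf_le_param; [split; nra|].
assert (INR n * g2 < INR n * (INR m / INR n)) by (apply Rmult_lt_compat_l; lra).
replace (INR n * (INR m / INR n)) with (INR m) in * by (field; lra). lra.
Qed.

Lemma prob_mean_in_ge_param (g1 g2 : R) :
  0 <= g1 <= g2 -> x + delta < g1 ->
  prob_mean_in n g2 x delta <= prob_mean_in n g1 x delta.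
Proof.
intros Hg Hup. pose proof INR_n_pos as Hn.
destruct prob_mean_in_finite_sum as [N HN]. rewrite !HN.
apply sum_Rle. intros m _. unfold window_pmf.
destruct (Rlt_dec _ _); [destruct (Rlt_dec _ _) as [Hm|]|]; try lra.
rewrite !sum_pmf_poisson. apply poisson_pmf_ge_param. split; [|nra].
assert (INR n * (INR m / INR n) < INR n * g1) by (apply Rmult_lt_compat_l; lra).
replace (INR n * (INR m / INR n)) with (INR m) in * by (field; lra). lra.
Qed.

End MeanInWindow.

Lemma Glb_Rbar_image_le (A : R -> Prop) (f : R -> R) (g : R) :
  A g -> Rbar_le (Glb_Rbar (fun y => exists g, A g /\ y = f g)) (f g).
Proof. intro Hg. apply (proj1 (Glb_Rbar_correct _)). eauto. Qed.

Lemma Glb_Rbar_image_ge (A : R -> Prop) (f : R -> R) (l : Rbar) :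
  (forall g, A g -> Rbar_le l (f g)) ->
  Rbar_le l (Glb_Rbar (fun y => exists g, A g /\ y = f g)).
Proof.
intro Hl. apply (proj2 (Glb_Rbar_correct _)). intros y [g [Hg ->]]. auto.
Qed.

Lemma Glb_Rbar_image_le_adherent (A : R -> Prop) (f : R -> R) (g0 : R) :
  continuity_pt f g0 ->
  (forall r, 0 < r -> exists g, A g /\ Rabs (g - g0) < r) ->
  Rbar_le (Glb_Rbar (fun y => exists g, A g /\ y = f g)) (f g0).
Proof.
intros Hcont Hadh.
pose proof (Glb_Rbar_image_le A f) as Hlb.
destruct (Glb_Rbar _) as [l| |]; simpl.
- apply Rnot_lt_le. intro Hlt.
  destruct (proj1 (continuity_pt_locally f g0) Hcont
              (mkposreal _ (proj2 (Rlt_0_minus _ _) Hlt))) as [r Hr].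
  destruct (Hadh r (cond_pos r)) as [g [Hg Hdist]].
  specialize (Hlb g Hg). specialize (Hr g Hdist). simpl in Hlb, Hr.
  apply Rabs_def2 in Hr. lra.
- destruct (Hadh 1 Rlt_0_1) as [g [Hg _]]. exact (Hlb g Hg).
- exact I.
Qed.

Section InfimumOverInterval.
Variables (f : R -> R) (a b lo_win hi_win : R).
Hypotheses (a_lt_b : a < b) (b_pos : 0 < b).
Hypothesis f_cont : forall g, continuity_pt f g.
Hypothesis f_incr : forall g1 g2, 0 <= g1 <= g2 -> g2 < lo_win -> f g1 <= f g2.
Hypothesis f_decr : forall g1 g2, 0 <= g1 <= g2 -> hi_win < g1 -> f g2 <= f g1.

Lemma Glb_Rbar_interval_le_ends :
  Rbar_le (Glb_Rbar (fun y => exists g, (a < g < b /\ 0 <= g) /\ y = f g)) (f (Rmax 0 a)) /\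
  Rbar_le (Glb_Rbar (fun y => exists g, (a < g < b /\ 0 <= g) /\ y = f g)) (f b).
Proof.
split.
- destruct (Rlt_le_dec a 0) as [Ha|Ha].
  + rewrite Rmax_left by lra. apply Glb_Rbar_image_le. lra.
  + rewrite Rmax_right by lra. apply Glb_Rbar_image_le_adherent; [apply f_cont|].
    intros r Hr. exists (a + Rmin r (b - a) / 2).
    assert (0 < Rmin r (b - a)) by (apply Rmin_pos; lra).
    pose proof (Rmin_l r (b - a)). pose proof (Rmin_r r (b - a)).
    split; [lra|]. rewrite Rabs_right; lra.
- apply Glb_Rbar_image_le_adherent; [apply f_cont|].
  intros r Hr. exists (b - Rmin r (b - Rmax 0 a) / 2).
  pose proof (Rmax_l 0 a). pose proof (Rmax_r 0 a).
  assert (Rmax 0 a < b) by (apply Rmax_lub_lt; lra).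
  assert (0 < Rmin r (b - Rmax 0 a)) by (apply Rmin_pos; lra).
  pose proof (Rmin_l r (b - Rmax 0 a)). pose proof (Rmin_r r (b - Rmax 0 a)).
  split; [lra|]. rewrite Rabs_left; lra.
Qed.

Lemma Glb_Rbar_interval_reduce :
  Glb_Rbar (fun y => exists g, (a < g < b /\ 0 <= g) /\ y = f g) =
  Glb_Rbar (fun y => exists g,
    ((a < g < b /\ lo_win <= g <= hi_win /\ 0 <= g) \/ g = Rmax 0 a \/ g = b) /\ y = f g).
Proof.
destruct Glb_Rbar_interval_le_ends as [Hlo Hhi].
apply Rbar_le_antisym; apply Glb_Rbar_image_ge.
- intros g [Hg | [-> | ->]]; [apply Glb_Rbar_image_le; tauto|assumption|assumption].
- intros g [Hg Hg0].
  destruct (Rlt_le_dec g lo_win) as [Hlow|Hlow].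
  + apply Rbar_le_trans with (f (Rmax 0 a)); [apply Glb_Rbar_image_le; auto|].
    apply f_incr; [|assumption]. split; [apply Rmax_l|apply Rmax_lub; lra].
  + destruct (Rle_lt_dec g hi_win) as [Hhigh|Hhigh].
    * apply Glb_Rbar_image_le. left. repeat split; lra.
    * apply Rbar_le_trans with (f b); [apply Glb_Rbar_image_le; auto|].
      apply f_decr; lra.
Qed.

End InfimumOverInterval.

Theorem proposition3 (x delta lambda eps : R) (n : nat) :
  0 < delta -> 0 <= lambda -> 0 < eps -> (1 <= n)%nat ->
  inf_prob (fun g => lambda - eps < g < lambda + eps /\ 0 <= g) n x delta =
  inf_prob (fun g =>
      (lambda - eps < g < lambda + eps /\ x - delta <= g <= x + delta /\ 0 <= g)
      \/ g = Rmax 0 (lambda - eps) \/ g = lambda + eps) n x delta.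
Proof.
intros Hdelta Hlambda Heps Hn.
apply Glb_Rbar_interval_reduce; [lra | lra | | |].
- intro g. exact (continuity_pt_prob_mean_in n x delta Hn g).
- intros g1 g2. exact (prob_mean_in_le_param n x delta Hn g1 g2).
- intros g1 g2. exact (prob_mean_in_ge_param n x delta Hn g1 g2).
Qed.
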